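(* Let $k=k(n)$ be integers with $1\le k=O(\log n)$ and let $\varphi(n)=o(1/k(n))$. For every $\eta>0$ there is $n_0$ such that for all $n\ge n_0$, every integer $r>(1/2-\varphi(n))n$, every $x\in Q$ and every $X\subseteq Q$ with $\mu(X)\le\mu(Q_r)$, $$\Pr(T(x)\in X)<(1+\eta)\mu(Q_r).$$
   Context: $Q=\{0,1\}^n$ with uniform probability measure $\mu$; for $y\in Q$, $|y|=\sum_i y_i$, and $Q_r=\{y\in Q: |y|\le r\}$. For $x\in Q$, $T(x)$ is the random element of $Q$ obtained by choosing $K$ uniformly from the $k$-subsets of $[n]$, keeping $x_i$ for $i\in K$, and replacing each $x_i$ with $i\notin K$ by an independent uniform bit. *)

From mathcomp Require Import all_boot.
From Stdlib Require Import Reals.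

Set Implicit Arguments.
Unset Strict Implicit.
Unset Printing Implicit Defensive.

Definition cube (n : nat) := {ffun 'I_n -> bool}.

Definition weight (n : nat) (y : cube n) : nat := #|[set i : 'I_n | y i]|.

Definition Qball (n r : nat) : {set cube n} := [set y : cube n | weight y <= r].

(* For a fixed k-set K, the number of outcomes y of the resampling (y agrees
   with x on K, free elsewhere; 2^(n-k) equally likely outcomes) landing in X.
   Summed over all k-subsets K of [n]. *)
Definition hitCount (n k : nat) (x : cube n) (X : {set cube n}) : nat :=
  \sum_(K : {set 'I_n} | #|K| == k)
     #|[set y in X | [forall i in K, y i == x i]]|.

Local Open Scope R_scope.

Definition mu (n : nat) (A : {set cube n}) : R := INR #|A| / 2 ^ n.

(* Pr(T(x) in X): K uniform among the C(n,k) k-subsets, the n-k other bits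
   independent uniform. *)
Definition PrT (n k : nat) (x : cube n) (X : {set cube n}) : R :=
  INR (hitCount k x X) / (INR 'C(n, k) * 2 ^ (n - k)).

From Stdlib Require Import Reals Lra.
From mathcomp Require Import all_boot zify.

(* Proof outline.  Write m = n - k and vol m r = sum_(j <= r) C(m, j) for the
   volume of a Hamming ball of radius r in {0,1}^m.

   A point y at distance d from x is produced by
      exactly C(n - d, k) of the kept sets K, so hitCount k x X is a sum over X
      of a decreasing function of the distance to x.  By rearrangement it is
      maximised, among sets no larger than Q_r, by the ball of radius r around
      x, which gives  hitCount <= C(n, k) vol (n - k) r.
   2. Binomial estimates.  vol m r is the sum of its top window of k terms and
      of vol m (r - k).  Close to the middle layer consecutive binomial
      coefficients have ratio close to 1, so the top window is at most 2/T of
      the T windows below it, whence T vol m r <= (T + 2) vol m (r - k); and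
      2^k vol m (r - k) <= vol n r by Pascal's rule.
   3. Asymptotics.  Since k = O(log n) and phi k = o(1), we have k^2 = o(n) and
      phi n k = o(n), which puts m, k, r in the regime of step 2 for n large.
   Choosing T > 2/eta yields Pr(T(x) in X) <= (1 + 2/T) mu(Q_r) < (1 + eta) mu(Q_r). *)

Local Open Scope nat_scope.

Definition vol (m r : nat) : nat := \sum_(j < r.+1) 'C(m, j).

Lemma vol_S m r : vol m r.+1 = vol m r + 'C(m, r.+1).
Proof. by rewrite /vol big_ord_recr. Qed.

Lemma vol_gt0 m r : 0 < vol m r.
Proof. by rewrite /vol big_ord_recl bin0. Qed.

Lemma card_small_subsets (T : finType) (B : {set T}) r :
  #|[set A : {set T} | A \subset B & #|A| <= r]| = vol #|B| r.
Proof.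
elim: r => [|r IH].
  rewrite /vol big_ord_recr big_ord0 /= -cards_draws.
  by apply: eq_card => A; rewrite !inE leqn0.
pose small j := [set A : {set T} | A \subset B & #|A| <= j].
pose top := [set A : {set T} | A \subset B & #|A| == r.+1].
have split_r : small r.+1 = small r :|: top.
  apply/setP => A; rewrite !inE leq_eqVlt ltnS.
  by case: (A \subset B) => //=; rewrite orbC.
have disj : small r :&: top = set0.
  apply/setP => A; rewrite !inE.
  by case: (A \subset B) => //=; case: eqP => [->|]; rewrite ?ltnn ?andbF.
change (#|small r.+1| = vol #|B| r.+1).
by rewrite split_r cardsU disj cards0 subn0 IH cards_draws vol_S.
Qed.

Lemma card_setI_pred (T : finType) (X : {set T}) (P : pred T) :
  #|[set y in X | P y]| = \sum_(y in X) P y.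
Proof.
rewrite -sum1_card big_mkcond /= [RHS]big_mkcond; apply: eq_bigr => y _.
by rewrite inE; case: (y \in X); case: (P y).
Qed.

Lemma sum_le_superlevel (T : finType) (X B : {set T}) (f : T -> nat) c :
  #|X| <= #|B| -> {in B, forall y, c <= f y} -> {in ~: B, forall y, f y <= c} ->
  \sum_(y in X) f y <= \sum_(y in B) f y.
Proof.
move=> cardXB fB fnB.
rewrite (big_setID B) [in X in _ <= X](big_setID X) /= setIC leq_add2l.
apply: (@leq_trans (#|X :\: B| * c)).
  rewrite -sum_nat_const; apply: leq_sum => y; rewrite inE => /andP[yB _].
  by apply: fnB; rewrite inE.
apply: (@leq_trans (#|B :\: X| * c)).
  rewrite leq_mul2r; apply/orP; right.
  by move: cardXB; rewrite -(cardsID B X) -(cardsID X B) setIC; lia.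
rewrite -sum_nat_const; apply: leq_sum => y; rewrite inE => /andP[_ yB].
exact: fB.
Qed.

Section HammingCube.
Variable n : nat.

Definition diffset (x y : cube n) : {set 'I_n} := [set i | y i != x i].
Definition flip (x : cube n) (S : {set 'I_n}) : cube n := [ffun i => (i \in S) (+) x i].

Lemma diffset_flip x S : diffset x (flip x S) = S.
Proof. by apply/setP => i; rewrite !inE ffunE; case: (i \in S); case: (x i). Qed.

Lemma flip_diffset x y : flip x (diffset x y) = y.
Proof. by apply/ffunP => i; rewrite !ffunE !inE; case: (y i); case: (x i). Qed.

Lemma card_by_diffset x (P : pred {set 'I_n}) :
  #|[set y : cube n | P (diffset x y)]| = #|[set S : {set 'I_n} | P S]|.
Proof.
rewrite -(card_imset _ (can_inj (flip_diffset x))); apply: eq_card => S.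
rewrite [in RHS]inE; apply/imsetP/idP => [[y]|PS].
  by rewrite inE => Py ->.
by exists (flip x S); rewrite ?inE diffset_flip.
Qed.

Definition hball (x : cube n) (r : nat) : {set cube n} :=
  [set y : cube n | #|diffset x y| <= r].

Lemma card_hball x r : #|hball x r| = vol n r.
Proof.
rewrite (card_by_diffset x (fun S => #|S| <= r)) -[n in vol n r]card_ord.
rewrite -cardsT -card_small_subsets.
by apply: eq_card => S; rewrite !inE subsetT.
Qed.

Lemma Qball_hball r : Qball n r = hball [ffun => false] r.
Proof.
apply/setP => y; rewrite !inE /weight.
suff -> : [set i | y i] = diffset [ffun => false] y by [].
by apply/setP => i; rewrite !inE ffunE; case: (y i).
Qed.

Lemma card_Qball r : #|Qball n r| = vol n r.
Proof. by rewrite Qball_hball card_hball. Qed.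

Lemma agree_subset (x y : cube n) (K : {set 'I_n}) :
  [forall i in K, y i == x i] = (K \subset ~: diffset x y).
Proof.
apply/forall_inP/subsetP => H i Hi.
  by rewrite !inE negbK; apply: H.
by move: (H i Hi); rewrite !inE negbK.
Qed.

Lemma card_complement (S : {set 'I_n}) : #|~: S| = n - #|S|.
Proof. by have := cardsC S; rewrite card_ord; lia. Qed.

Lemma hitCountE k x (X : {set cube n}) :
  hitCount k x X = \sum_(y in X) 'C(n - #|diffset x y|, k).
Proof.
rewrite /hitCount.
under [LHS]eq_bigr => K _ do rewrite (@card_setI_pred _ X (fun y => [forall i in K, y i == x i])).
rewrite exchange_big /=; apply: eq_bigr => y _.
rewrite -card_complement -cards_draws -sum1_card big_mkcond /=.
rewrite [RHS]big_mkcond /=; apply: eq_bigr => K _.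
by rewrite !inE agree_subset andbC; case: (_ \subset _); case: (_ == k).
Qed.

(* The resampling hits the ball around x exactly C(n,k) vol(n-k,r) times:
   for each kept set K the free coordinates form a cube of dimension n - k. *)
Lemma hitCount_hball k x r : hitCount k x (hball x r) = 'C(n, k) * vol (n - k) r.
Proof.
rewrite /hitCount -[n in 'C(n, k)]card_ord -card_draws -sum_nat_cond_const.
apply: eq_bigr => K /eqP cardK.
rewrite -cardK -card_complement -card_small_subsets.
rewrite -(card_by_diffset x (fun S => (S \subset ~: K) && (#|S| <= r))).
by apply: eq_card => y; rewrite !inE agree_subset subsetC andbC.
Qed.

Lemma hitCount_le k x (X : {set cube n}) r :
  #|X| <= #|Qball n r| -> hitCount k x X <= 'C(n, k) * vol (n - k) r.
Proof.
move=> cardX; rewrite -(hitCount_hball k x r) !hitCountE.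
apply: (@sum_le_superlevel _ X (hball x r) _ 'C(n - r, k)).
- by rewrite card_hball -card_Qball.
- by move=> y; rewrite inE => dy; apply: leq_bin2l; lia.
- by move=> y; rewrite !inE -ltnNge => dy; apply: leq_bin2l; lia.
Qed.

End HammingCube.

Lemma vol_SS m r : vol m.+1 r.+1 = vol m r.+1 + vol m r.
Proof.
rewrite /vol big_ord_recl [X in _ = X + _]big_ord_recl /= !bin0.
under eq_bigr => i _ do rewrite /bump /= add1n binS.
by rewrite big_split /= -addnA.
Qed.

Lemma vol_mono m r : vol m r <= vol m r.+1.
Proof. by rewrite vol_S leq_addr. Qed.

Lemma vol_shift m k r : k <= r -> 2 ^ k * vol m (r - k) <= vol (m + k) r.
Proof.
elim: k r => [|k IH] r hk; first by rewrite expn0 mul1n subn0 addn0.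
case: r hk => [//|r] hk.
rewrite addnS vol_SS expnS -mulnA subSS.
apply: (@leq_trans (2 * vol (m + k) r)); first by rewrite leq_mul2l IH.
by rewrite mul2n -addnn leq_add2r vol_mono.
Qed.

Definition window (m k s : nat) : nat := \sum_(i < k) 'C(m, s - i).

Lemma vol_window m k s : k <= s -> vol m s = window m k s + vol m (s - k).
Proof.
elim: k => [|k IH] hk; first by rewrite /window big_ord0 subn0.
rewrite IH ?(ltnW hk) // /window big_ord_recr /= -addnA; congr (_ + _).
have -> : s - k = (s - k.+1).+1 by lia.
by rewrite vol_S addnC.
Qed.

Lemma binom_ratio m a j : a < j -> 'C(m, j) * a.+1 <= 'C(m, j.-1) * (m - a).
Proof.
case: j => [//|i] /= hi.
apply: (@leq_trans ('C(m, i.+1) * i.+1)); first by rewrite leq_mul2l hi orbT.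
by rewrite mulnC mul_bin_left mulnC leq_mul2l; apply/orP; right; lia.
Qed.

Lemma window_step m k a s : a + k <= s -> window m k s * a.+1 <= window m k s.-1 * (m - a).
Proof.
move=> h; rewrite /window !big_distrl /=; apply: leq_sum => i _.
have -> : s.-1 - i = (s - i).-1 by lia.
by apply: binom_ratio; have := ltn_ord i; lia.
Qed.

Lemma window_iter m k a s d : a + k + d <= s.+1 ->
  window m k s * a.+1 ^ d <= window m k (s - d) * (m - a) ^ d.
Proof.
elim: d => [|d IH] h; first by rewrite !expn0 !muln1 subn0.
have IHd := IH ltac:(lia).
have step := @window_step m k a (s - d) ltac:(lia).
have -> : s - d.+1 = (s - d).-1 by lia.
rewrite !expnS.
set A := a.+1 ^ d in IHd *; set B := (m - a) ^ d in IHd *.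
set v := window m k (s - d) in IHd step *.
set v' := window m k (s - d).-1 in step *.
apply: (@leq_trans (v * B * a.+1)); first by have := leq_mul IHd (leqnn a.+1); nia.
by have := leq_mul step (leqnn B); nia.
Qed.

Lemma sum_windows m k s T : T * k <= s -> \sum_(t < T) window m k (s - t * k) <= vol m s.
Proof.
elim: T s => [|T IH] s h; first by rewrite big_ord0.
rewrite big_ord_recl /= mul0n subn0 (@vol_window m k s) ?leq_add2l; last by lia.
apply: leq_trans (IH (s - k) ltac:(lia)).
by apply: eq_leq; apply: eq_bigr => t _; congr (window m k _); rewrite /bump /=; lia.
Qed.

Lemma leq_pow_base a b e : a <= b -> a ^ e <= b ^ e.
Proof. by move=> h; elim: e => [|e IH]; rewrite ?expnS // leq_mul. Qed.

(* Comparing the top window with the T windows below it, each shifted down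
   by at most N = (T+1)k positions. *)
Lemma window_decay m k r a T : 2 * a + 1 <= m -> a + (T + 2) * k <= r ->
  T * window m k r * a.+1 ^ ((T + 1) * k) <= vol m (r - k) * (m - a) ^ ((T + 1) * k).
Proof.
move=> ham har.
set N := (T + 1) * k.
have hAB : a.+1 <= m - a by lia.
have shifted t : t < T ->
    window m k r * a.+1 ^ N <= window m k (r - k - t * k) * (m - a) ^ N.
  move=> ht.
  have hd : (t + 1) * k <= N by rewrite /N leq_mul2r; apply/orP; right; lia.
  have -> : N = (t + 1) * k + (N - (t + 1) * k) by lia.
  rewrite !expnD !mulnA.
  have -> : r - k - t * k = r - (t + 1) * k by lia.
  apply: leq_mul; first exact: (@window_iter m k a r ((t + 1) * k) ltac:(nia)).
  exact: leq_pow_base.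
apply: (leq_trans _ (leq_mul (sum_windows m k (r - k) T ltac:(nia)) (leqnn ((m - a) ^ N)))).
rewrite big_distrl /= -mulnA.
have -> : T * (window m k r * a.+1 ^ N) = \sum_(t < T) (window m k r * a.+1 ^ N).
  by rewrite big_const_ord iter_addn_0 mulnC.
by apply: leq_sum => t _; apply: shifted.
Qed.

Lemma pow_add_le A e N : (A + e) ^ N.+1 <= (A + e) * A ^ N + N * e * (A + e) ^ N.
Proof.
elim: N => [|N IH]; first by rewrite !expn0 !muln1 mul0n addn0.
set B := A + e in IH *.
have hAB : A <= B by rewrite /B leq_addr.
rewrite expnS.
apply: (@leq_trans (B * (B * A ^ N + N * e * B ^ N))); first by rewrite leq_mul2l IH orbT.
rewrite !expnS.
have h1 : B * (B * A ^ N) = B * A * A ^ N + e * B * A ^ N by rewrite /B; nia.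
have h2 : e * B * A ^ N <= e * B * B ^ N by rewrite leq_mul2l leq_pow_base ?orbT.
nia.
Qed.

Lemma pow_add_le_double A e N : 2 * N * e <= A -> (A + e) ^ N <= 2 * A ^ N.
Proof.
move=> h.
have h1 := pow_add_le A e N.
set B := A + e in h1 *.
have hB : A <= B by rewrite /B leq_addr.
rewrite expnS in h1.
case: (posnP B) => [B0|Bpos].
  by rewrite B0; case: N h1 h => [|N]; rewrite ?expn0 ?exp0n //; lia.
have : B * B ^ N <= B * (2 * A ^ N).
  have h3 : N * e * B ^ N * 2 <= B * B ^ N by nia.
  nia.
by rewrite leq_mul2l gtn_eqF.
Qed.

(* Near the middle layer (m - 2a - 1 small compared to a / N) the ratio
   (m-a)/(a+1) is so close to 1 that the top window is at most 2/T of the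
   ball of radius r - k. *)
Lemma window_small_at m k r a T : 2 * a + 1 <= m -> a + (T + 2) * k <= r ->
  2 * ((T + 1) * k) * (m - a - a.+1) <= a.+1 ->
  T * window m k r <= 2 * vol m (r - k).
Proof.
move=> h1 h2 h3.
have decay := @window_decay m k r a T h1 h2.
have hB := @pow_add_le_double a.+1 (m - a - a.+1) ((T + 1) * k) h3.
rewrite (_ : a.+1 + (m - a - a.+1) = m - a) in hB; last by lia.
set N := (T + 1) * k in decay hB.
have hpos : 0 < a.+1 ^ N by rewrite expn_gt0.
have : T * window m k r * a.+1 ^ N <= 2 * vol m (r - k) * a.+1 ^ N.
  apply: (leq_trans decay).
  by have := leq_mul (leqnn (vol m (r - k))) hB; nia.
by rewrite leq_mul2r gtn_eqF.
Qed.

(* The regime in which the top window of width k of the ball of radius r in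
   dimension m is negligible: r exceeds (T+2)k, r is close enough to m/2 in
   terms of N = (T+1)k, and m is large compared to N. *)
Definition near_middle (T m k r : nat) : Prop :=
  [/\ (T + 2) * k <= r,
      2 * ((T + 1) * k) * (m + 2 * ((T + 2) * k)) + (T + 2) * k <= (4 * ((T + 1) * k) + 1) * r
    & 4 * ((T + 1) * k) + 1 <= m].

Lemma window_small {T m k r} : near_middle T m k r -> T * window m k r <= 2 * vol m (r - k).
Proof.
rewrite /near_middle; set L := (T + 2) * k; set N := (T + 1) * k => -[hL hr hm].
set a := minn (r - L) ((m - 1) %/ 2).
apply: (@window_small_at m k r a T); rewrite -/L -/N; [lia | lia |].
rewrite /a; case: (leqP (r - L) ((m - 1) %/ 2)) => ha.
- have h : 2 * N * (m + 2 * L - 2 * r) <= r - L by nia.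
  apply: leq_trans (_ : r - L <= _); last by lia.
  apply: leq_trans h; rewrite leq_mul2l; apply/orP; right; lia.
- have : m - (m - 1) %/ 2 - ((m - 1) %/ 2).+1 <= 1 by lia.
  case: (m - _ - _) => [|[|//]] _; first by rewrite muln0.
  by lia.
Qed.

Lemma vol_ratio {T m k r} : near_middle T m k r -> T * vol m r <= (T + 2) * vol m (r - k).
Proof.
move=> reg; have [hL _ _] := reg.
rewrite (@vol_window m k r); last by apply: leq_trans hL; rewrite leq_pmull ?addn2.
by have := window_small reg; rewrite mulnDr mulnDl; lia.
Qed.

Lemma hitCount_ratio {T n k r : nat} (x : cube n) (X : {set cube n}) :
  k <= n -> near_middle T (n - k) k r -> #|X| <= #|Qball n r| ->
  T * 2 ^ k * hitCount k x X <= (T + 2) * 'C(n, k) * vol n r.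
Proof.
move=> kn reg cardX; have [hL _ _] := reg.
have hit := @hitCount_le n k x X r cardX.
have ratio := vol_ratio reg.
have kr : k <= r by apply: leq_trans hL; rewrite leq_pmull ?addn2.
have shift := @vol_shift (n - k) k r kr.
rewrite subnK // in shift.
apply: (@leq_trans ('C(n, k) * 2 ^ k * (T * vol (n - k) r))).
  by have := leq_mul (leqnn (T * 2 ^ k)) hit; rewrite -!mulnA => h; nia.
apply: (@leq_trans ('C(n, k) * 2 ^ k * ((T + 2) * vol (n - k) (r - k)))).
  by rewrite leq_mul2l ratio orbT.
by have := leq_mul (leqnn ('C(n, k) * (T + 2))) shift; nia.
Qed.

Local Open Scope R_scope.

Lemma INR_addn (a b : nat) : INR (a + b)%nat = INR a + INR b.
Proof. exact: plus_INR. Qed.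

Lemma INR_muln (a b : nat) : INR (a * b)%nat = INR a * INR b.
Proof. exact: mult_INR. Qed.

Lemma INR_subn (a b : nat) : (b <= a)%nat -> INR (a - b)%nat = INR a - INR b.
Proof. by move/leP; apply: minus_INR. Qed.

Lemma INR_expn2 (a : nat) : INR (2 ^ a)%nat = 2 ^ a.
Proof. by elim: a => [|a IH] //; rewrite expnS INR_muln IH. Qed.

Lemma leq_of_INR {a b : nat} : INR a <= INR b -> (a <= b)%nat.
Proof. by move=> h; apply/leP; apply: INR_le. Qed.

Lemma INR_of_leq {a b : nat} : (a <= b)%nat -> INR a <= INR b.
Proof. by move/leP; apply: le_INR. Qed.

(* ln y = 4 ln (y^(1/4)) <= 4 y^(1/4). *)
Lemma ln_le_quartic_root {y} : 0 < y -> ln y <= 4 * sqrt (sqrt y).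
Proof.
move=> hy.
have hq : 0 < sqrt (sqrt y) by apply: sqrt_lt_R0; apply: sqrt_lt_R0.
set q := sqrt (sqrt y) in hq *.
have -> : y = (q * q) * (q * q).
  by rewrite /q sqrt_sqrt ?sqrt_sqrt //; [lra | apply: sqrt_pos].
rewrite !ln_mult; try nra.
have := exp_ineq1_le (ln q); rewrite exp_ln //; lra.
Qed.

Lemma sq_log_negligible (C : R) {eps : R} : 0 < eps ->
  exists N : nat, forall n : nat, (N <= n)%nat -> (C * ln (INR n)) ^ 2 <= eps * INR n.
Proof.
move=> heps.
set a := 16 * C ^ 2 / eps.
have ha : 0 <= a by apply: Rmult_le_pos; [nra | apply/Rlt_le/Rinv_0_lt_compat].
have [N hN] := INR_unbounded (a ^ 2 + 1).
exists N => n hn.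
have hNn := INR_of_leq hn.
have n1 : 1 < INR n by nra.
have ln0 : 0 <= ln (INR n) by rewrite -ln_1; apply/Rlt_le/ln_increasing; lra.
have lnq := ln_le_quartic_root (ltac:(lra) : 0 < INR n).
have s0 : 0 <= sqrt (sqrt (INR n)) by apply: sqrt_pos.
have q2 : sqrt (sqrt (INR n)) ^ 2 = sqrt (INR n) by rewrite /= Rmult_1_r sqrt_sqrt //; apply: sqrt_pos.
have s2 : sqrt (INR n) * sqrt (INR n) = INR n by rewrite sqrt_sqrt; lra.
have hsa : a <= sqrt (INR n).
  apply: Rnot_lt_le => hlt.
  have := Rmult_le_0_lt_compat _ _ _ _ (sqrt_pos (INR n)) (sqrt_pos (INR n)) hlt hlt.
  rewrite s2 /=; lra.
have log2 : (C * ln (INR n)) ^ 2 <= 16 * C ^ 2 * sqrt (INR n).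
  have : ln (INR n) ^ 2 <= (4 * sqrt (sqrt (INR n))) ^ 2 by apply: pow_incr; lra.
  rewrite !Rpow_mult_distr q2 => h.
  have := Rmult_le_compat_l (C ^ 2) _ _ (pow2_ge_0 C) h; lra.
have -> : eps * INR n = eps * sqrt (INR n) * sqrt (INR n) by rewrite Rmult_assoc s2.
have e16 : 16 * C ^ 2 = eps * a by rewrite /a; field; lra.
rewrite e16 in log2.
have := Rmult_le_compat_l (eps * sqrt (INR n)) _ _ (ltac:(have := sqrt_pos (INR n); nra)) hsa.
lra.
Qed.

Lemma growth_estimates {k : nat -> nat} {phi : nat -> R}
  (hklog : exists (C : R) (N : nat), forall n : nat, (N <= n)%nat ->
             INR (k n) <= C * ln (INR n))
  (hphi : Un_cv (fun n => phi n * INR (k n)) 0) {eps : R} : 0 < eps ->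
  exists N : nat, forall n : nat, (N <= n)%nat ->
    INR (k n) * INR (k n) <= eps * INR n /\ Rabs (phi n) * INR (k n) <= eps.
Proof.
move=> heps.
have [C [N1 hN1]] := hklog.
have [N2 hN2] := sq_log_negligible C heps.
have [N3 hN3] := hphi eps heps.
exists (N1 + N2 + N3)%nat => n hn; split.
- have k0 := pos_INR (k n).
  have hk := hN1 n ltac:(lia).
  have := hN2 n ltac:(lia); rewrite /= Rmult_1_r; nra.
- have := hN3 n (ltac:(apply/leP; lia)).
  rewrite /Rdist Rminus_0_r Rabs_mult (Rabs_right (INR (k n))); first lra.
  exact/Rle_ge/pos_INR.
Qed.

(* Turning the asymptotic estimates (with E = eps n, eps = 1/(10 (T+3)^2))
   into the integer conditions of near_middle for m = n - K. *)
Lemma near_middle_of_estimates {T n K r : nat} {ph E : R} :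
  (1 <= K)%nat -> INR n = 10 * (INR T + 3) ^ 2 * E ->
  INR K * INR K <= E -> Rabs ph * INR K * INR n <= E ->
  (1 / 2 - ph) * INR n < INR r ->
  (K <= n)%nat /\ near_middle T (n - K) K r.
Proof.
move=> K1 hn hK2 hphK hr.
have t0 := pos_INR T; have n0 := pos_INR n.
have k1 : 1 <= INR K by apply: (INR_of_leq K1).
set t := INR T in t0 hn *; set k := INR K in k1 hK2 hphK *.
set P := Rabs ph * INR n.
have P0 : 0 <= P by apply: Rmult_le_pos => //; apply: Rabs_pos.
have kE : k <= E by nra.
have PE : P <= E by rewrite /P; have := Rabs_pos ph; nra.
have PkE : P * k <= E by rewrite /P; lra.
have hr' : INR n / 2 - P < INR r by rewrite /P; have := Rle_abs ph; nra.
have tE : 0 <= t * E by nra.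
have ttE : 0 <= t * t * E by nra.
have hKn : (K <= n)%nat by apply: leq_of_INR; rewrite -/k; nra.
(* The three conditions are linear in E once k^2, P k and P are bounded by E. *)
split => //; split; apply: leq_of_INR;
  rewrite !(INR_muln, INR_addn) ?INR_subn //= -/t -/k.
- have := Rmult_le_compat_l (t + 2) _ _ (ltac:(lra)) kE; nra.
- have h1 := Rmult_le_compat_l (2 * (t + 1) * (2 * t + 3)) _ _ (ltac:(nra)) hK2.
  have h2 := Rmult_le_compat_l (t + 2) _ _ (ltac:(lra)) kE.
  have h3 := Rmult_le_compat_l (4 * (t + 1)) _ _ (ltac:(lra)) PkE.
  have h4 := Rmult_le_compat_l (4 * (t + 1) * k + 1) _ _ (ltac:(nra)) (Rlt_le _ _ hr').
  nra.
- have := Rmult_le_compat_l (4 * t + 6) _ _ (ltac:(lra)) kE; nra.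
Qed.

Lemma card_le_of_mu {n} {X Y : {set cube n}} : mu X <= mu Y -> (#|X| <= #|Y|)%nat.
Proof.
rewrite /mu /Rdiv => h; apply: leq_of_INR.
have p0 : 0 < / 2 ^ n by apply/Rinv_0_lt_compat/pow_lt; lra.
exact: Rmult_le_reg_r p0 h.
Qed.

Lemma PrT_le_of_count {T n k r : nat} (x : cube n) (X : {set cube n}) :
  (0 < T)%nat -> (k <= n)%nat ->
  (T * 2 ^ k * hitCount k x X <= (T + 2) * 'C(n, k) * vol n r)%nat ->
  PrT k x X <= (1 + 2 / INR T) * mu (Qball n r).
Proof.
move=> T0 kn /INR_of_leq; rewrite !INR_muln INR_expn2 INR_addn /= => count.
rewrite /PrT /mu card_Qball.
rewrite -[in X in _ <= _ * (_ / X)](subnK kn) pow_add.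
have t0 : 0 < INR T by apply: (lt_INR 0); apply/ltP.
have c0 : 0 < INR 'C(n, k) by apply: (lt_INR 0); apply/ltP; rewrite bin_gt0.
have p0 : 0 < 2 ^ (n - k) by apply: pow_lt; lra.
have q0 : 0 < 2 ^ k by apply: pow_lt; lra.
set h := INR (hitCount k x X) in count *; set c := INR 'C(n, k) in count c0 *.
set v := INR (vol n r) in count *; set t := INR T in count t0 *.
set p := 2 ^ (n - k) in p0 *; set q := 2 ^ k in count q0 *.
apply: (Rmult_le_reg_r (t * q * c * p)); first by do 3 apply: Rmult_lt_0_compat => //.
have -> : h / (c * p) * (t * q * c * p) = t * q * h by field; lra.
have -> : (1 + 2 / t) * (v / (p * q)) * (t * q * c * p) = (t + 2) * c * v by field; lra.
lra.
Qed.

Lemma mu_Qball_gt0 n r : 0 < mu (Qball n r).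
Proof.
rewrite /mu card_Qball; apply: Rdiv_lt_0_compat; last by apply: pow_lt; lra.
by apply: (lt_INR 0); apply/ltP; apply: vol_gt0.
Qed.

Lemma small_inverse {eta : R} : 0 < eta -> exists T : nat, (0 < T)%nat /\ 2 / INR T < eta.
Proof.
move=> heta; have [T hT] := INR_unbounded (2 / eta).
have T0 : 0 < INR T by have := Rdiv_lt_0_compat 2 eta ltac:(lra) heta; lra.
exists T; split; first by rewrite lt0n; apply/eqP => T_eq0; move: T0; rewrite T_eq0 /=; lra.
have := Rmult_lt_compat_l eta _ _ heta hT.
have -> : eta * (2 / eta) = 2 by field; lra.
move=> eta_T; apply: (Rmult_lt_reg_r (INR T)) => //.
have -> : 2 / INR T * INR T = 2 by field; lra.
lra.
Qed.

Theorem claimE (k : nat -> nat) (phi : nat -> R)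
  (hk1 : forall n : nat, (1 <= k n)%nat)
  (hklog : exists (C : R) (N : nat), forall n : nat, (N <= n)%nat ->
             INR (k n) <= C * ln (INR n))
  (hphi : Un_cv (fun n => phi n * INR (k n)) 0) :
  forall eta : R, 0 < eta ->
  exists n0 : nat, forall n : nat, (n0 <= n)%nat ->
    forall (r : nat), (1 / 2 - phi n) * INR n < INR r ->
    forall (x : cube n) (X : {set cube n}),
      mu X <= mu (Qball n r) ->
      PrT (k n) x X < (1 + eta) * mu (Qball n r).
Proof.
move=> eta heta.
have [T [Tpos small_T]] := small_inverse heta.
have c0 : 0 < 10 * (INR T + 3) ^ 2 by have := pos_INR T; nra.
have [N hN] := growth_estimates hklog hphi (Rinv_0_lt_compat _ c0).
exists N => n hn r hr x X hmu.
have [hk2 hphk] := hN n hn.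
have E : INR n = 10 * (INR T + 3) ^ 2 * (/ (10 * (INR T + 3) ^ 2) * INR n).
  by field; have := pos_INR T; lra.
have [kn reg] := near_middle_of_estimates (hk1 n) E hk2 (Rmult_le_compat_r _ _ _ (pos_INR n) hphk) hr.
have := PrT_le_of_count x X Tpos kn
  (hitCount_ratio x X kn reg (card_le_of_mu hmu)).
have := Rmult_lt_compat_r _ _ _ (mu_Qball_gt0 n r) small_T.
lra.
Qed.
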